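(* Let $d,n\ge 1$, let $\boldsymbol{a}_1,\ldots,\boldsymbol{a}_n\in\mathbf{R}^d$, let $w_1,\ldots,w_n>0$, fix $\varepsilon>0$ and $0<p\le 2$. Define $\Phi(\boldsymbol{x})=\sum_{j=1}^n w_j\,(\lVert\boldsymbol{x}-\boldsymbol{a}_j\rVert^2+\varepsilon)^{p/2}$ with gradient $\Phi'(\boldsymbol{x})=p\sum_j w_j(\lVert\boldsymbol{x}-\boldsymbol{a}_j\rVert^2+\varepsilon)^{p/2-1}(\boldsymbol{x}-\boldsymbol{a}_j)$. For a point $\boldsymbol{x}^{(t)}\in\mathbf{R}^d$ let $\mu_j^{(t)}=w_j\,(\lVert\boldsymbol{x}^{(t)}-\boldsymbol{a}_j\rVert^2+\varepsilon)^{p/2-1}$, let $\boldsymbol{x}^{(t+1)}=\sum_j\mu_j^{(t)}\boldsymbol{a}_j/\sum_j\mu_j^{(t)}$, and define $$\Psi_t(\boldsymbol{x})=\Phi(\boldsymbol{x}^{(t)})+(\boldsymbol{x}-\boldsymbol{x}^{(t)})^T\Phi'(\boldsymbol{x}^{(t)})+\frac{p}{2}\Big(\sum_j\mu_j^{(t)}\Big)\lVert\boldsymbol{x}-\boldsymbol{x}^{(t)}\rVert^2.$$ Then (i) $\Phi(\boldsymbol{x})\le\Psi_t(\boldsymbol{x})$ for all $\boldsymbol{x}\in\mathbf{R}^d$; (ii) $\Phi(\boldsymbol{x}^{(t)})=\Psi_t(\boldsymbol{x}^{(t)})$; (iii) $\Psi_t$ has $\boldsymbol{x}^{(t+1)}$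 as its unique global minimizer.
   Context: $\lVert\cdot\rVert$ is the Euclidean norm on $\mathbf{R}^d$. *)

From HB Require Import structures.
From mathcomp Require Import all_boot all_order all_algebra.
From mathcomp Require Import all_classical all_reals all_analysis.
Set Implicit Arguments. Unset Strict Implicit. Unset Printing Implicit Defensive.
Import Order.TTheory GRing.Theory Num.Theory.
Local Open Scope ring_scope.

Section Defs.
Variables (R : realType) (d n : nat).

Definition dotp (u v : 'rV[R]_d) : R := \sum_(i < d) u 0 i * v 0 i.
Definition sqnorm (u : 'rV[R]_d) : R := dotp u u.

Variables (a : 'I_n -> 'rV[R]_d) (w : 'I_n -> R) (eps p : R).

Definition Phi (x : 'rV[R]_d) : R :=
  \sum_(j < n) w j * powR (sqnorm (x - a j) + eps) (p / 2).

Definition Phi' (x : 'rV[R]_d) : 'rV[R]_d :=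
  p *: \sum_(j < n) (w j * powR (sqnorm (x - a j) + eps) (p / 2 - 1)) *: (x - a j).

Definition mu (xt : 'rV[R]_d) (j : 'I_n) : R :=
  w j * powR (sqnorm (xt - a j) + eps) (p / 2 - 1).

Definition xnext (xt : 'rV[R]_d) : 'rV[R]_d :=
  (\sum_(j < n) mu xt j)^-1 *: \sum_(j < n) mu xt j *: a j.

Definition Psi (xt x : 'rV[R]_d) : R :=
  Phi xt + dotp (x - xt) (Phi' xt)
  + p / 2 * (\sum_(j < n) mu xt j) * sqnorm (x - xt).

End Defs.

(** Since [0 < p/2 <= 1], the map [s |-> s^(p/2)] is concave, so each term
    [w_j (||x - a_j||^2 + eps)^(p/2)] lies below its tangent at
    [||x^(t) - a_j||^2 + eps]; summing these tangents gives exactly [Psi_t].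
    Moreover [Phi'(x^(t)) = p (sum_j mu_j) (x^(t) - x^(t+1))], so completing the
    square writes [Psi_t x] as a constant plus
    [p/2 (sum_j mu_j) ||x - x^(t+1)||^2], minimized exactly at [x^(t+1)]. *)
From Pilot Require Import Defs.
From HB Require Import structures.
From mathcomp Require Import all_boot all_order all_algebra.
From mathcomp Require Import all_classical all_reals all_analysis.
From mathcomp Require Import ring lra.
Import Order.TTheory GRing.Theory Num.Theory.
Local Open Scope ring_scope.

Section PowConcavity.
Context {R : realType}.

(* Young's inequality [a b <= a^r / r + b^s / s] with [a = u^q], [b = 1],
   [r = 1/q], [s = 1/(1-q)]. *)
Lemma powR_le_tangent1 (u q : R) : 0 < u -> 0 < q -> q <= 1 ->
  powR u q <= q * u + (1 - q).
Proof.
move=> u_gt0 q_gt0; rewrite le_eqVlt => /predU1P[->|q_lt1].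
  by rewrite powRr1 ?(ltW u_gt0)// mul1r subrr addr0.
have := @conjugate_powR R (powR u q) 1 q^-1 (1 - q)^-1 (powR_ge0 _ _) ler01.
rewrite !invr_gt0 q_gt0 subr_gt0 q_lt1 => /(_ isT isT).
rewrite !invrK mulr1 powR1 -powRrM mulfV ?gt_eqF// powRr1 ?(ltW u_gt0)// mul1r.
by rewrite [u * q]mulrC; apply; rewrite addrC subrK.
Qed.

Lemma powR_le_tangent (s t q : R) :
  0 < s -> 0 < t -> 0 < q -> q <= 1 ->
  powR s q <= powR t q + q * powR t (q - 1) * (s - t).
Proof.
move=> s_gt0 t_gt0 q_gt0 q_le1.
have tq_gt0 : 0 < powR t q by apply: powR_gt0.
have -> : powR s q = powR (s / t) q * powR t q.
  by rewrite -powRM ?divfK ?gt_eqF// ltW// divr_gt0.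
rewrite powRB ?(gt_eqF t_gt0) ?implybT// powRr1 ?(ltW t_gt0)//.
have -> : powR t q + q * (powR t q / t) * (s - t)
          = (q * (s / t) + (1 - q)) * powR t q.
  by field; rewrite gt_eqF.
by rewrite ler_wpM2r ?(ltW tq_gt0) ?powR_le_tangent1 ?divr_gt0.
Qed.

End PowConcavity.

Section Euclidean.
Context {R : realType} {d : nat}.
Implicit Types (u v x y b : 'rV[R]_d).

Lemma dotp0l v : dotp 0 v = 0.
Proof. by rewrite /dotp big1 // => i _; rewrite mxE mul0r. Qed.

Lemma dotpZr u k v : dotp u (k *: v) = k * dotp u v.
Proof. by rewrite /dotp mulr_sumr; apply: eq_bigr => i _; rewrite mxE mulrCA. Qed.

Lemma dotp_sumr (n : nat) u (v : 'I_n -> 'rV[R]_d) :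
  dotp u (\sum_(j < n) v j) = \sum_(j < n) dotp u (v j).
Proof.
rewrite /dotp; under eq_bigr => i _ do rewrite summxE mulr_sumr.
exact: exchange_big.
Qed.

Lemma sqnorm0 : sqnorm (0 : 'rV[R]_d) = 0.
Proof. exact: dotp0l. Qed.

Lemma sqnorm_ge0 u : 0 <= sqnorm u.
Proof. by rewrite /sqnorm /dotp sumr_ge0 // => i _; rewrite -expr2 sqr_ge0. Qed.

Lemma sqnorm_eq0 u : (sqnorm u == 0) = (u == 0).
Proof.
apply/idP/eqP => [|->]; last by rewrite sqnorm0.
rewrite /sqnorm /dotp psumr_eq0 => [/allP u0|i _]; last by rewrite -expr2 sqr_ge0.
apply/rowP => i; rewrite mxE.
by have /implyP/(_ isT) := u0 i (mem_index_enum _); rewrite mulf_eq0 orbb => /eqP.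
Qed.

Lemma sqnorm_sub_recenter x y b :
  sqnorm (x - b) = sqnorm (y - b) + 2 * dotp (x - y) (y - b) + sqnorm (x - y).
Proof.
rewrite /sqnorm /dotp mulr_sumr -!big_split /=; apply: eq_bigr => i _.
by rewrite !mxE; ring.
Qed.

End Euclidean.

Section Majorization.
Variables (R : realType) (d n : nat) (a : 'I_n -> 'rV[R]_d) (w : 'I_n -> R).
Variables (eps p : R) (xt : 'rV[R]_d).
Hypotheses (w_gt0 : forall j, 0 < w j) (eps_gt0 : 0 < eps).
Hypotheses (p_gt0 : 0 < p) (p_le2 : p <= 2).

Local Notation mu := (mu a w eps p xt).
Local Notation S := (\sum_(j < n) mu j).
Local Notation xn := (xnext a w eps p xt).
Local Notation Phi := (Phi a w eps p).
Local Notation Psi := (Psi a w eps p xt).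

Lemma sqnorm_add_eps_gt0 x j : 0 < sqnorm (x - a j) + eps.
Proof. by rewrite ltr_wpDl // sqnorm_ge0. Qed.

Lemma mu_gt0 j : 0 < mu j.
Proof. by rewrite mulr_gt0 // powR_gt0 // sqnorm_add_eps_gt0. Qed.

Lemma sum_mu_gt0 : (0 < n)%N -> 0 < S.
Proof.
move=> n_gt0; rewrite (bigD1 (Ordinal n_gt0)) //= ltr_wpDr ?mu_gt0 //.
by rewrite sumr_ge0 // => j _; rewrite ltW ?mu_gt0.
Qed.

Lemma Phi'_xnext : (0 < n)%N -> Phi' a w eps p xt = (p * S) *: (xt - xn).
Proof.
move=> n_gt0; have S_neq0 : S != 0 by rewrite gt_eqF ?sum_mu_gt0.
have -> : Phi' a w eps p xt = p *: (S *: xt - \sum_(j < n) mu j *: a j).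
  by rewrite /Phi' scaler_suml -sumrB; congr (_ *: _); apply: eq_bigr => j _;
    rewrite scalerBr.
by apply/rowP => i; rewrite !mxE; field.
Qed.

Lemma Psi_sqnorm_xnext x : (0 < n)%N ->
  Psi x = Phi xt - p / 2 * S * sqnorm (xt - xn) + p / 2 * S * sqnorm (x - xn).
Proof.
move=> n_gt0; rewrite /Psi Phi'_xnext // dotpZr (sqnorm_sub_recenter x xt xn).
by field.
Qed.

Lemma Psi_sum_tangents x : Psi x = \sum_(j < n)
  (w j * powR (sqnorm (xt - a j) + eps) (p / 2)
   + p / 2 * mu j * ((sqnorm (x - a j) + eps) - (sqnorm (xt - a j) + eps))).
Proof.
rewrite big_split /= -/(Phi xt) /Psi /Phi' dotpZr dotp_sumr -addrA; congr (_ + _).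
have -> : p / 2 * S * sqnorm (x - xt) = \sum_(j < n) p / 2 * mu j * sqnorm (x - xt).
  by rewrite -mulr_suml -mulr_sumr.
rewrite mulr_sumr -big_split /=; apply: eq_bigr => j _.
by rewrite dotpZr (sqnorm_sub_recenter x xt (a j)) /Defs.mu; field.
Qed.

Lemma Phi_le_Psi x : Phi x <= Psi x.
Proof.
have q_gt0 : 0 < p / 2 by rewrite divr_gt0.
have q_le1 : p / 2 <= 1 by rewrite ler_pdivrMr // mul1r.
rewrite Psi_sum_tangents; apply: ler_sum => j _.
rewrite /Defs.mu mulrCA -mulrA -mulrDr ler_wpM2l ?(ltW (w_gt0 j)) //.
by rewrite powR_le_tangent ?sqnorm_add_eps_gt0.
Qed.

Lemma Phi_eq_Psi_xt : Phi xt = Psi xt.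
Proof. by rewrite /Psi subrr dotp0l sqnorm0 mulr0 !addr0. Qed.

Lemma Psi_argmin y : (0 < n)%N ->
  (forall x, Psi y <= Psi x) <-> y = xn.
Proof.
move=> n_gt0; have c_gt0 : 0 < p / 2 * S by rewrite mulr_gt0 ?divr_gt0 ?sum_mu_gt0.
split => [Psi_min|-> x].
  have := Psi_min xn; rewrite !Psi_sqnorm_xnext // subrr sqnorm0 mulr0 lerD2l.
  rewrite pmulr_rle0 // => y_le0.
  by apply/eqP; rewrite -subr_eq0 -sqnorm_eq0 eq_le y_le0 sqnorm_ge0.
rewrite !Psi_sqnorm_xnext // subrr sqnorm0 mulr0 lerD2l.
by rewrite mulr_ge0 ?(ltW c_gt0) ?sqnorm_ge0.
Qed.

End Majorization.

Theorem proposition2 (R : realType) (d n : nat) (a : 'I_n -> 'rV[R]_d)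
  (w : 'I_n -> R) (eps p : R) (xt : 'rV[R]_d) :
  (0 < d)%N -> (0 < n)%N -> (forall j, 0 < w j) -> 0 < eps -> 0 < p -> p <= 2 ->
  [/\ (forall x, Phi a w eps p x <= Psi a w eps p xt x),
      Phi a w eps p xt = Psi a w eps p xt xt
    & (forall y, (forall x, Psi a w eps p xt y <= Psi a w eps p xt x)
                 <-> y = xnext a w eps p xt)].
Proof.
move=> _ n_gt0 w_gt0 eps_gt0 p_gt0 p_le2; split.
- exact: Phi_le_Psi.
- exact: Phi_eq_Psi_xt.
- by move=> y; apply: Psi_argmin.
Qed.
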